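(* Let $G$ be a loop-less digraph on $n$ vertices in which every vertex has in-degree at least $1$, and let $\mathring{G}$ be the digraph obtained from $G$ by adding a loop on every vertex. Then $\mathring{G}$ admits a boolean nilpotent function of class at most $4$. Moreover, if $G$ is symmetric or has a vertex of out-degree $n-1$, then $\mathring{G}$ admits a boolean nilpotent function of class at most $3$.
   Context: A digraph is symmetric if for every arc $(u,v)$, $(v,u)$ is also an arc. A boolean function on $[n]$ is a map $f:\{0,1\}^n\to\{0,1\}^n$; its (unsigned) interaction graph has an arc $(j,i)$ iff $f_i$ depends essentially on $x_j$, i.e. $f_i(a)\neq f_i(b)$ for some $a,b$ differing only in coordinate $j$ (loops included). A digraph $H$ on $[n]$ admits $f$ if the interaction graph of $f$ equals $H$. $f$ is nilpotent if $f^k$ is constant for some $k\geq 0$ ($f^0=\mathrm{id}$); the least such $k$ is its class. *)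

From mathcomp Require Import all_boot.
Set Implicit Arguments. Unset Strict Implicit. Unset Printing Implicit Defensive.

(* A digraph on [n] = {0,...,n-1} is a relation on 'I_n; G j i means arc (j,i). *)
Definition config (n : nat) := {ffun 'I_n -> bool}.

Definition flip n (x : config n) (j : 'I_n) : config n :=
  [ffun k => if k == j then ~~ x k else x k].

Definition bfun (n : nat) := config n -> config n.

Definition depends n (f : bfun n) (j i : 'I_n) : Prop :=
  exists a : config n, f a i != f (flip a j) i.

Definition admits n (H : rel 'I_n) (f : bfun n) : Prop :=
  forall j i : 'I_n, H j i <-> depends f j i.

Definition is_constant n (g : bfun n) : Prop :=
  exists c : config n, forall x, g x = c.

Definition nilpotent_class_le n (f : bfun n) (k : nat) : Prop :=
  exists m, m <= k /\ is_constant (iter m f).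

Definition loopless n (G : rel 'I_n) : Prop := forall v, ~~ G v v.
Definition indeg_ge1 n (G : rel 'I_n) : Prop := forall i, exists j, G j i.
Definition symmetric_digraph n (G : rel 'I_n) : Prop := forall u v, G u v -> G v u.
Definition has_full_outdeg_vertex n (G : rel 'I_n) : Prop :=
  exists v, forall u, u != v -> G v u.
Definition add_loops n (G : rel 'I_n) : rel 'I_n := fun u v => (u == v) || G u v.

From mathcomp Require Import all_boot.

Set Implicit Arguments. Unset Strict Implicit. Unset Printing Implicit Defensive.

(* Fix S and let f_i(x) be x_i /\ (/\_{j -> i} x_j) for i in S and
   ~x_i /\ (/\_{j -> i} x_j) otherwise; since G is loopless, the interaction
   graph of f is G with all loops added.  If i is in S and has an in-neighbour
   c outside S, then f_i(f(x)) = 0 for every x: it needs f_c(x) = 1, hence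
   x_c = 0, and f_i(x) = 1, hence x_c = 1.  A coordinate of f^k that is
   identically 0 forces the same for all its out-neighbours in f^(k+1), so
   f^(d+2) = 0 as soon as every vertex is reachable from S by a path of length
   at most d.  For class 4, take for S an independent set from which every
   vertex is reachable in at most two steps (a quasi-kernel of the reversed
   graph, as in Chvatal-Lovasz); in-degree >= 1 and independence provide the
   in-neighbours outside S.  For class 3, take for S the complement of a
   maximal independent set when G is symmetric, and all vertices but v when v
   dominates all the others. *)

Fixpoint within n (G : rel 'I_n) (A : pred 'I_n) (d : nat) (i : 'I_n) : Prop :=
  if d is d'.+1 then within G A d' i \/ exists2 j, G j i & within G A d' j
  else A i.

Section Within.

Variables (n : nat) (G : rel 'I_n).

Lemma within_base (A : pred 'I_n) d i : A i -> within G A d i.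
Proof. by move=> Ai; elim: d => [|d IHd] //=; left. Qed.

Lemma within_step (A : pred 'I_n) d i j :
  G j i -> within G A d j -> within G A d.+1 i.
Proof. by move=> Gji Aj; right; exists j. Qed.

Lemma within_sub (A B : pred 'I_n) d i :
  {subset A <= B} -> within G A d i -> within G B d i.
Proof.
move=> sAB; elim: d i => [|d IHd] i /=; first exact: sAB.
by case=> [Ai | [j Gji Aj]];
  [left; exact: IHd | right; exists j; last exact: IHd].
Qed.

End Within.

Definition dies_by n (f : bfun n) (k : nat) (i : 'I_n) : Prop :=
  forall x, iter k f x i = false.

Lemma dies_byS n (f : bfun n) k i : dies_by f k i -> dies_by f k.+1 i.
Proof. by move=> fki x; rewrite iterSr. Qed.

Lemma nilpotent_of_dies_by n (f : bfun n) k :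
  (forall i, dies_by f k i) -> nilpotent_class_le f k.
Proof.
move=> fk; exists k; split => //; exists [ffun _ => false] => x.
by apply/ffunP => i; rewrite ffunE fk.
Qed.

Definition and_net n (G : rel 'I_n) (S : pred 'I_n) : bfun n :=
  fun x => [ffun i => (x i == S i) && [forall j, G j i ==> x j]].

Section AndNet.

Variables (n : nat) (G : rel 'I_n) (S : pred 'I_n).
Local Notation f := (and_net G S).

Lemma and_netP (x : config n) i : f x i -> x i = S i /\ forall j, G j i -> x j.
Proof.
rewrite ffunE => /andP[/eqP -> /forallP inx]; split=> // j Gji.
exact: implyP (inx j) Gji.
Qed.

Lemma and_net_in_false (x : config n) i j :
  G j i -> x j = false -> f x i = false.
Proof. by move=> Gji xj; apply/negP => /and_netP[_ /(_ j Gji)]; rewrite xj. Qed.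

Lemma and_net_flip_other (x : config n) i j :
  j != i -> ~~ G j i -> f (flip x j) i = f x i.
Proof.
move=> nji nGji; rewrite /and_net !ffunE (ifN_eqC _ _ nji).
congr (_ && _); apply: eq_forallb => k; rewrite ffunE.
by case: eqP => [-> | //]; rewrite (negbTE nGji).
Qed.

Lemma admits_and_net : loopless G -> admits (add_loops G) f.
Proof.
move=> Gl j i; split=> [/orP Gji | [x]]; last first.
  apply: contraR; rewrite negb_or => /andP[nji nGji].
  by rewrite and_net_flip_other ?eqxx.
pose x : config n := [ffun k => if k == i then S k else true].
have fxi : f x i.
  rewrite ffunE !ffunE !eqxx /=; apply/forallP => k; apply/implyP => Gki.
  by rewrite ffunE; case: eqP => // eki; move: Gki (Gl i); rewrite eki => ->.
exists x; rewrite fxi; case: Gji => [/eqP -> | Gji].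
  by rewrite /and_net /flip !ffunE !eqxx; case: (S i).
have nji : j != i by apply: contraTneq Gji => ->; exact: Gl.
apply/negP => /and_netP[_ /(_ j Gji)].
by rewrite /flip !ffunE eqxx (negbTE nji).
Qed.

Lemma and_net_dies_by2 u c : S u -> G c u -> ~~ S c -> dies_by f 2 u.
Proof.
move=> Su Gcu nSc x; apply/negP => /= /and_netP[fxu /(_ c Gcu)/and_netP[xc _]].
by move: fxu; rewrite Su => /and_netP[_ /(_ c Gcu)]; rewrite xc (negbTE nSc).
Qed.

Lemma and_net_dies_byS k i j : G j i -> dies_by f k j -> dies_by f k.+1 i.
Proof. by move=> Gji fkj x; rewrite iterS (and_net_in_false Gji). Qed.

Hypothesis S_anchored : forall u, S u -> exists2 c, G c u & ~~ S c.

Lemma and_net_dies_within d i : within G S d i -> dies_by f d.+2 i.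
Proof.
elim: d i => [|d IHd] i /=.
  move=> Si; have [c Gci nSc] := S_anchored Si.
  exact: and_net_dies_by2 Gci nSc.
case=> [Si | [j Gji Sj]]; first exact/dies_byS/IHd.
exact: and_net_dies_byS Gji (IHd j Sj).
Qed.

Lemma and_net_nilpotent d :
  (forall i, within G S d i) -> nilpotent_class_le f d.+2.
Proof.
by move=> GSd; apply: nilpotent_of_dies_by => i; apply: and_net_dies_within.
Qed.

End AndNet.

Definition independent n (G : rel 'I_n) (L : {set 'I_n}) : Prop :=
  {in L &, forall a b, ~~ G a b}.

Section QuasiKernel.

Variables (n : nat) (G : rel 'I_n).
Hypothesis G_loopless : loopless G.

Lemma independent_in_neighbour_out (L : {set 'I_n}) u :
  indeg_ge1 G -> independent G L -> u \in L -> exists2 c, G c u & c \notin L.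
Proof.
move=> Gin indL uL; have [c Gcu] := Gin u; exists c => //.
by apply: contraTN Gcu => cL; exact: indL.
Qed.

(* Induction on S: pick v in S, build L' in S minus v and its out-neighbours,
   and add v to L' unless v already has an in-neighbour in L'. *)
Lemma quasi_kernel_sub (S : {set 'I_n}) :
  exists L : {set 'I_n}, [/\ L \subset S, independent G L,
    {in S, forall u, within G (mem L) 2 u}
    & symmetric_digraph G -> {in S, forall u, within G (mem L) 1 u}].
Proof.
elim: {S}_.+1 {-2}S (ltnSn #|S|) => // m IHm S.
case: (set_0Vmem S) => [-> _ | [v vS]].
  by exists set0; split=> [|a b|u|_ u]; rewrite ?sub0set ?inE.
rewrite ltnS (cardsD1 v) vS => ltSm.
pose S' := S :\: (v |: [set u | G v u]).
have S'S u : u \in S' -> [/\ u \in S, u != v & ~~ G v u].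
  by rewrite !inE => /andP[/norP[-> ->] ->].
have ltS'm : #|S'| < m.
  apply: leq_trans ltSm; rewrite add1n ltnS subset_leq_card //.
  by apply/subsetP => u /S'S[uS nuv _]; rewrite !inE nuv.
have [L' [sL'S' indL' L'2 L'1]] := IHm S' ltS'm.
have L'S' l : l \in L' -> [/\ l \in S, l != v & ~~ G v l].
  by move=> /(subsetP sL'S'); exact: S'S.
have outS' u : u \in S -> u \notin S' -> u = v \/ G v u.
  by move=> uS; rewrite !inE uS andbT negbK => /orP[/eqP|]; [left | right].
have [/existsP[l /andP[lL' Glv]] | noLv] := boolP [exists l in L', G l v].
- exists L'; split=> //.
  + by apply/subsetP => w /L'S'[].
  + move=> u uS; have [/L'2 // | /(outS' u uS)[-> | Gvu]] := boolP (u \in S').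
      by apply: within_step Glv _; exact: within_base.
    by apply: within_step Gvu _; apply: within_step Glv _; exact: within_base.
  + by move=> Gsym; have [_ _] := L'S' l lL'; rewrite Gsym.
- have sL' : {subset L' <= v |: L'} by move=> u uL; rewrite !inE uL orbT.
  exists (v |: L'); split.
  + by apply/subsetP => u; rewrite !inE => /orP[/eqP -> // | /L'S'[]].
  + move=> a b; rewrite !inE => /orP[/eqP -> | aL] /orP[/eqP -> | bL].
    * exact: G_loopless.
    * by have [] := L'S' b bL.
    * by apply: contra noLv => Gav; apply/existsP; exists a; rewrite aL.
    * exact: indL'.
  + move=> u uS; have [/L'2 | /(outS' u uS)[-> | Gvu]] := boolP (u \in S').
    * exact: within_sub sL'.
    * by apply: within_base; rewrite !inE eqxx.
    * by apply: within_step Gvu _; apply: within_base; rewrite !inE eqxx.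
  + move=> Gsym u uS; have [/(L'1 Gsym) | /(outS' u uS)[-> | Gvu]] :=
      boolP (u \in S').
    * exact: within_sub sL'.
    * by apply: within_base; rewrite !inE eqxx.
    * by apply: within_step Gvu _; apply: within_base; rewrite !inE eqxx.
Qed.

End QuasiKernel.

Theorem theorem6 (n : nat) (G : rel 'I_n) :
  loopless G -> indeg_ge1 G ->
  (exists f : bfun n, admits (add_loops G) f /\ nilpotent_class_le f 4) /\
  (symmetric_digraph G \/ has_full_outdeg_vertex G ->
   exists f : bfun n, admits (add_loops G) f /\ nilpotent_class_le f 3).
Proof.
move=> Gl Gin; have [L [_ indL L2 L1]] := quasi_kernel_sub Gl setT.
have in_out := independent_in_neighbour_out Gin indL.
split=> [|[Gsym | [v Gv]]].
- exists (and_net G (mem L)); split; first exact: admits_and_net.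
  by apply: and_net_nilpotent => [u /in_out | i]; last exact: L2.
- exists (and_net G [pred i | i \notin L]); split; first exact: admits_and_net.
  apply: and_net_nilpotent => [u uL | i].
    have [uL' | [c Gcu cL]] := L1 Gsym u (in_setT u).
      by move: uL => /= /negP.
    by exists c; rewrite //= negbK.
  have [iL | iL] := boolP (i \in L); last exact: within_base.
  have [c Gci cL] := in_out i iL.
  by apply: within_step Gci _; exact: within_base.
- exists (and_net G [pred i | i != v]); split; first exact: admits_and_net.
  apply: and_net_nilpotent => [u uv | i].
    by exists v; [exact: Gv | rewrite /= eqxx].
  have [-> | iv] := eqVneq i v; last exact: within_base.
  have [c Gcv] := Gin v.
  have cv : c != v by apply: contraTneq Gcv => ->; exact: Gl.
  by apply: within_step Gcv _; exact: within_base.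
Qed.
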